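(* Let $H$ be a finite group acting by automorphisms on a discrete group $\Gamma$, let $L$ be a Hopf algebra and let $\pi:C^*(\Gamma)\rtimes C(H)\to L$ be a surjective Hopf algebra map such that the restriction of $\pi$ to $C(H)=1\otimes C(H)$ is injective, and such that for $r\in\Gamma$ and $f\in C(H)$, $\pi(r\otimes1)=\pi(1\otimes f)$ implies $r=1$. Then $\pi$ is an isomorphism.
   Context: The crossed coproduct Hopf algebra $C^*(\Gamma)\rtimes C(H)$ is $C^*(\Gamma)\otimes C(H)$ as an algebra, with comultiplication $\Delta(r\otimes\delta_k)=\sum_{h\in H}(r\otimes\delta_h)\otimes(h^{-1}\cdot r\otimes\delta_{h^{-1}k})$ for $r\in\Gamma$, $k\in H$, where $\delta_k$ is the indicator function of $k$. *)

(* Algebraic (Hopf-algebraic) rendering of the crossed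
   coproduct C[Gamma] x| C(H) over the complex numbers  R[i]  (R : realType). *)
From HB Require Import structures.
From mathcomp Require Import all_boot all_order all_algebra all_fingroup.
From mathcomp Require Import finmap complex reals.

Set Implicit Arguments.
Unset Strict Implicit.
Unset Printing Implicit Defensive.

Import GRing.Theory.
Local Open Scope ring_scope.

(* An element of  L (x) L  is represented by a finite list of pairs
   [(a_1,b_1); ...; (a_n,b_n)] standing for  sum_i a_i (x) b_i.  Two such
   representatives denote the same tensor iff they are identified by every
   bilinear map out of L x L (universal property of the tensor product).                            *)
Section Tensors.
Variables (K : fieldType) (L : lmodType K).

Definition bilinear_map (W : lmodType K) (b : L -> L -> W) : Prop :=
  (forall (a : K) x y z, b (a *: x + y) z = a *: b x z + b y z) /\
  (forall (a : K) x y z, b z (a *: x + y) = a *: b z x + b z y).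

Definition trilinear_map (W : lmodType K) (b : L -> L -> L -> W) : Prop :=
  [/\ (forall (a : K) x y u v, b (a *: x + y) u v = a *: b x u v + b y u v),
      (forall (a : K) x y u v, b u (a *: x + y) v = a *: b u x v + b u y v) &
      (forall (a : K) x y u v, b u v (a *: x + y) = a *: b u v x + b u v y)].

Definition tensor2_eq (s t : seq (L * L)) : Prop :=
  forall (W : lmodType K) (b : L -> L -> W), bilinear_map b ->
    \sum_(u <- s) b u.1 u.2 = \sum_(u <- t) b u.1 u.2.

Definition tensor3_eq (s t : seq (L * L * L)) : Prop :=
  forall (W : lmodType K) (b : L -> L -> L -> W), trilinear_map b ->
    \sum_(u <- s) b u.1.1 u.1.2 u.2 = \sum_(u <- t) b u.1.1 u.1.2 u.2.

End Tensors.

Record hopf_data (K : fieldType) (L : algType K) := HopfData {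
  comul : L -> seq (L * L);
  counit : L -> K;
  antipode : L -> L
}.

Record is_hopf_algebra (K : fieldType) (L : algType K) (h : hopf_data L)
    : Prop := IsHopfAlgebra {
  comul_linear : forall (a : K) (x y : L),
    tensor2_eq (comul h (a *: x + y))
      ([seq (a *: u.1, u.2) | u <- comul h x] ++ comul h y);
  comul_mult : forall x y : L,
    tensor2_eq (comul h (x * y))
      [seq (u.1 * v.1, u.2 * v.2) | u <- comul h x, v <- comul h y];
  comul_one : tensor2_eq (comul h 1) [:: (1, 1)];
  comul_coassoc : forall x : L,
    tensor3_eq
      [seq (v.1, v.2, u.2) | u <- comul h x, v <- comul h u.1]
      [seq (u.1, v.1, v.2) | u <- comul h x, v <- comul h u.2];
  counit_linear : forall (a : K) (x y : L),
    counit h (a *: x + y) = a * counit h x + counit h y;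
  counit_mult : forall x y : L, counit h (x * y) = counit h x * counit h y;
  counit_one : counit h 1 = 1;
  counit_left : forall x : L, \sum_(u <- comul h x) counit h u.1 *: u.2 = x;
  counit_right : forall x : L, \sum_(u <- comul h x) counit h u.2 *: u.1 = x;
  antipode_linear : forall (a : K) (x y : L),
    antipode h (a *: x + y) = a *: antipode h x + antipode h y;
  antipode_left : forall x : L,
    \sum_(u <- comul h x) antipode h u.1 * u.2 = counit h x *: 1;
  antipode_right : forall x : L,
    \sum_(u <- comul h x) u.1 * antipode h u.2 = counit h x *: 1
}.

Definition is_action_by_automorphisms (Gamma : groupType) (H : finGroupType)
    (act : H -> Gamma -> Gamma) : Prop :=
  [/\ forall r, act 1%g r = r,
      forall (h k : H) r, act (h * k)%g r = act h (act k r) &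
      forall (h : H) (r s : Gamma), act h (r * s)%g = (act h r * act h s)%g].

(* The crossed coproduct  A = C[Gamma] x| C(H).  As a vector space it has the
   basis  r (x) delta_k  (r in Gamma, k in H); an element of A is a finitely
   supported coefficient function  Gamma * H -> K.                          *)
Definition crossed_coprod (K : fieldType) (Gamma : groupType) (H : finGroupType)
  := {fsfun (Gamma * H) -> K with 0}.

(* The linear map  pi : A -> L  determined by its values
   p r k = pi (r (x) delta_k)  on the basis.                                 *)
Definition cc_map (K : fieldType) (Gamma : groupType) (H : finGroupType)
    (L : lmodType K) (p : Gamma -> H -> L) (c : crossed_coprod K Gamma H) : L :=
  \sum_(x <- finsupp c) c x *: p x.1 x.2.

(* pi is a Hopf algebra map  C[Gamma] x| C(H) -> L, written on the basis:
   - multiplicativity: (r (x) delta_k)(s (x) delta_l) = [k = l] rs (x) delta_k;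
   - unit: 1_A = sum_k 1 (x) delta_k;
   - comultiplication:
       Delta (r (x) delta_k)
         = sum_h (r (x) delta_h) (x) (h^-1 . r (x) delta_(h^-1 k));
   - counit: eps (r (x) delta_k) = delta_k(1).                              *)
Record is_cc_hopf_map (K : fieldType) (Gamma : groupType) (H : finGroupType)
    (act : H -> Gamma -> Gamma) (L : algType K) (hL : hopf_data L)
    (p : Gamma -> H -> L) : Prop := IsCCHopfMap {
  cc_map_mult : forall (r s : Gamma) (k l : H),
    p r k * p s l = if k == l then p (r * s)%g k else 0;
  cc_map_one : \sum_(k : H) p 1%g k = 1;
  cc_map_comul : forall (r : Gamma) (k : H),
    tensor2_eq (comul hL (p r k))
      [seq (p r h, p (act h^-1%g r) (h^-1 * k)%g) | h <- enum H];
  cc_map_counit : forall (r : Gamma) (k : H),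
    counit hL (p r k) = (k == 1%g)%:R
}.

From HB Require Import structures.
From mathcomp Require Import all_boot all_order all_algebra all_fingroup.
From mathcomp Require Import finmap complex reals.
From mathcomp Require Import boolp classical_sets.

Set Implicit Arguments.
Unset Strict Implicit.
Unset Printing Implicit Defensive.

(* Multiplying by the idempotents p 1 k (nonzero since C(H) injects) splits
   injectivity into one statement per k: the vectors p r k, r in Gamma, are
   linearly independent.  Applying (phi (p 1 k * -) (x) id) o Delta to p r k
   yields phi (p r k) p (k^-1 . r) 1, so in a dependence
   p r0 k = sum_r a_r p r k, testing against a functional dual to some p r1 k
   with a_r1 != 0 forces p (k^-1 . r0) 1 = p (k^-1 . r1) 1.  The same trick on
   the other tensor leg shows that p s 1 = p 1 1 makes every p s h a multiple
   of p 1 h, so the separation hypothesis gives s = 1; hence r |-> p r 1 is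
   injective and r0 = r1.  As L is an arbitrary vector space, the functionals
   come from Zorn's lemma. *)

Import GRing.Theory.
Local Open Scope ring_scope.

Section LinearAlgebra.
Variables (K : fieldType) (V : lmodType K).
Local Open Scope classical_set_scope.

Lemma linear_lin_comb (U : lmodType K) (f : U -> V) (I : Type) (s : seq I)
    (c : I -> K) (u : I -> U) :
  linear f -> f (\sum_(i <- s) c i *: u i) = \sum_(i <- s) c i *: f (u i).
Proof.
move=> fL; pose F := HB.pack_for {linear U -> V} f (GRing.isLinear.Build _ _ _ _ f fL).
by rewrite -[LHS]/(F _) linear_sum; apply: eq_bigr => i _; rewrite linearZ.
Qed.

Definition subspace (A : set V) := A 0 /\ forall a x y, A x -> A y -> A (a *: x + y).

Lemma subspaceZ A a x : subspace A -> A x -> A (a *: x).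
Proof. by case=> A0 Al Ax; rewrite -[a *: x]addr0; apply: Al. Qed.

Lemma subspaceB A x y : subspace A -> A x -> A y -> A (x - y).
Proof. by case=> _ Al Ax Ay; rewrite addrC -scaleN1r; apply: Al. Qed.

Lemma maximal_subspace_avoiding (W : set V) (v : V) : subspace W -> ~ W v ->
  exists A, [/\ subspace A, W `<=` A, ~ A v &
                forall B, subspace B -> A `<` B -> B v].
Proof.
move=> Wsub Wv; pose good A := [/\ subspace A, W `<=` A & ~ A v].
(* [Zorn_bigcup] also requires the union of the empty chain, i.e. [set0]. *)
pose P (A : set V) := A = set0 \/ good A.
have [A [PA Amax]] : exists A, P A /\ forall B, A `<` B -> ~ P B.
  apply: Zorn_bigcup => F FP Ftot.
  have [[Y FY gY]|nogood] := pselect (exists2 X, F X & good X); last first.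
    left; apply/seteqP; split=> // x [X FX Xx].
    have [Xe|gX] := FP X FX; first by rewrite Xe in Xx.
    by case: nogood; exists X.
  have goodF X : F X -> X !=set0 -> good X.
    by move=> FX [x Xx]; case: (FP X FX) => // Xe; rewrite Xe in Xx.
  right; split; [split|by move=> x Wx; exists Y => //; case: gY => _ + _; apply|].
  - by exists Y => //; case: gY => -[].
  - move=> a x y [X1 FX1 X1x] [X2 FX2 X2y].
    have [X12|X21] := Ftot X1 X2 FX1 FX2.
    + have [[_ X2l] _ _] := goodF X2 FX2 (ex_intro _ y X2y).
      by exists X2 => //; apply: X2l => //; apply: X12.
    + have [[_ X1l] _ _] := goodF X1 FX1 (ex_intro _ x X1x).
      by exists X1 => //; apply: X1l => //; apply: X21.
  - move=> [X FX Xv]; have [[_ _]] := goodF X FX (ex_intro _ v Xv); exact.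
have [A0|[Asub WA Av]] := PA.
  exfalso; apply: (Amax W); last by right; split.
  by rewrite A0; split=> // W0; apply: (W0 0); case: Wsub.
exists A; split=> // B Bsub AB; apply: contrapT => Bv.
by apply: (Amax B AB); right; split=> //; apply: subset_trans WA (properW AB).
Qed.

Lemma maximal_subspace_complement (A : set V) (v : V) :
  subspace A -> ~ A v -> (forall B, subspace B -> A `<` B -> B v) ->
  forall x, exists c, A (x - c *: v).
Proof.
move=> Asub Av Amax x; have [Ax|Ax] := pselect (A x).
  by exists 0; rewrite scale0r subr0.
pose B y := exists c, A (y - c *: x).
have Bsub : subspace B.
  split; first by exists 0; rewrite scale0r subr0; case: Asub.
  move=> a y z [c1 Ay] [c2 Az]; exists (a * c1 + c2).
  have -> : a *: y + z - (a * c1 + c2) *: x = a *: (y - c1 *: x) + (z - c2 *: x).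
    by rewrite scalerDl -scalerA scalerBr opprD addrACA.
  by case: Asub => _; apply.
have AB : A `<` B.
  split=> [y Ay|BA]; first by exists 0; rewrite scale0r subr0.
  by apply: Ax; apply: BA; exists 1; rewrite scale1r subrr; case: Asub.
have [c Avx] := Amax B Bsub AB.
have c0 : c != 0 by apply: contra_notN Av => /eqP c0; rewrite c0 scale0r subr0 in Avx.
exists c^-1; have -> : x - c^-1 *: v = - c^-1 *: (v - c *: x).
  by rewrite scaleNr scalerBr scalerA mulVf // scale1r opprB.
exact: subspaceZ.
Qed.

Lemma exists_scalar_separating (W : set V) (v : V) : subspace W -> ~ W v ->
  exists phi : {scalar V}, phi v = 1 /\ forall x, W x -> phi x = 0.
Proof.
move=> Wsub Wv; have [A [Asub WA Av Amax]] := maximal_subspace_avoiding Wsub Wv.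
have coord x : exists c, A (x - c *: v) := maximal_subspace_complement Asub Av Amax x.
have coord_uniq x c1 c2 : A (x - c1 *: v) -> A (x - c2 *: v) -> c1 = c2.
  move=> A1 A2; apply: contrapT => /eqP; rewrite -subr_eq0 => c12.
  have : A ((c1 - c2) *: v).
    rewrite scalerBl (_ : _ - _ = x - c2 *: v - (x - c1 *: v)); first exact: subspaceB.
    by rewrite opprB [RHS]addrC addrA subrK.
  by move/(subspaceZ (c1 - c2)^-1 Asub); rewrite scalerA mulVf // scale1r.
pose phi x := projT1 (cid (coord x)).
have phiP x : A (x - phi x *: v) by rewrite /phi; case: cid.
have phiL : scalar phi.
  move=> a x y; apply: (coord_uniq (a *: x + y)) => //.
  have := Asub.2 a _ _ (phiP x) (phiP y).
  by rewrite scalerDl -scalerA scalerBr opprD addrACA.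
exists (HB.pack_for {scalar V} phi (GRing.isLinear.Build _ _ _ _ phi phiL)) => /=.
split; first by apply: (coord_uniq v) => //; rewrite scale1r subrr; case: Asub.
by move=> x Wx; apply: (coord_uniq x) => //; rewrite scale0r subr0; apply: WA.
Qed.

Lemma exists_scalar_eq1 (v : V) : v != 0 -> exists phi : {scalar V}, phi v = 1.
Proof.
move=> v0; have zero_sub : subspace [set 0].
  by split=> // a x y -> ->; rewrite scaler0 addr0.
have [phi [phi1 _]] := exists_scalar_separating zero_sub (elimN eqP v0).
by exists phi.
Qed.

Definition lin_indep (I : eqType) (s : seq I) (v : I -> V) :=
  forall c : I -> K, \sum_(i <- s) c i *: v i = 0 -> {in s, forall i, c i = 0}.

Lemma lin_indep_coef (I : eqType) (s : seq I) (v : I -> V) (c d : I -> K) :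
  lin_indep s v -> \sum_(i <- s) c i *: v i = \sum_(i <- s) d i *: v i ->
  {in s, c =1 d}.
Proof.
move=> vI cd i si; apply/eqP; rewrite -subr_eq0; apply/eqP.
apply: (vI (fun j => c j - d j)) si.
by rewrite (eq_bigr _ (fun j _ => scalerBl _ _ _)) sumrB cd subrr.
Qed.

Lemma lin_comb_delta (I : eqType) (s : seq I) (v : I -> V) (j : I) :
  uniq s -> j \in s -> \sum_(i <- s) (i == j)%:R *: v i = v j.
Proof.
move=> us js; rewrite (bigD1_seq j) //= eqxx scale1r big1 ?addr0 // => i /negbTE ->.
by rewrite scale0r.
Qed.

Lemma lin_indep_cons (I : eqType) (s : seq I) (v : I -> V) (x : I) :
  lin_indep s v -> (forall a : I -> K, v x != \sum_(i <- s) a i *: v i) ->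
  lin_indep (x :: s) v.
Proof.
move=> vI vx c; rewrite big_cons => cx0.
have cx : c x = 0.
  apply/eqP; apply: contraNT (vx (fun i => - (c i / c x))) => cx.
  apply/eqP; rewrite -[v x]scale1r -(mulVf cx) -scalerA.
  rewrite -[c x *: v x]opprK (addr0_eq cx0) scalerN scaler_sumr -sumrN.
  by apply: eq_bigr => i _; rewrite scalerA mulrC scaleNr.
rewrite cx scale0r add0r in cx0.
by move=> i; rewrite inE => /predU1P[->|]; [|apply: vI].
Qed.

Lemma exists_dual_scalar (I : eqType) (s : seq I) (v : I -> V) (i : I) :
  uniq s -> lin_indep s v -> i \in s ->
  exists phi : {scalar V}, phi (v i) = 1 /\ {in s, forall j, j != i -> phi (v j) = 0}.
Proof.
move=> us vI si; pose W y := exists2 d : I -> K, d i = 0 & y = \sum_(j <- s) d j *: v j.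
have Wsub : subspace W.
  split; first by exists (fun=> 0) => //; rewrite big1 // => j _; rewrite scale0r.
  move=> a x y [d1 d1i ->] [d2 d2i ->]; exists (fun j => a * d1 j + d2 j).
    by rewrite d1i d2i mulr0 addr0.
  by rewrite scaler_sumr -big_split; apply: eq_bigr => j _; rewrite scalerDl scalerA.
have [|phi [phi1 phi0]] := @exists_scalar_separating W (v i) Wsub.
  move=> [d di vid]; have := lin_indep_coef (c := fun j => (j == i)%:R) (d := d) vI _ si.
  by rewrite lin_comb_delta // -vid eqxx di => /(_ erefl)/eqP; rewrite oner_eq0.
exists phi; split=> // j sj ji; apply: phi0; exists (fun k => (k == j)%:R).
  by rewrite eq_sym (negPf ji).
by rewrite lin_comb_delta.
Qed.
End LinearAlgebra.

Lemma lin_comb_inj_neq0 (K : fieldType) (V : lmodType K) (I : finType) (v : I -> V) :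
  injective (fun f : {ffun I -> K} => \sum_i f i *: v i) -> forall i, v i != 0.
Proof.
move=> vinj i; apply/eqP => vi0.
have /ffunP/(_ i) : [ffun j => (j == i)%:R] = [ffun=> 0] :> {ffun I -> K}.
  apply: vinj; rewrite /= (bigD1 i) //= ffunE eqxx scale1r vi0 add0r.
  rewrite big1 => [|j ji]; last by rewrite ffunE (negPf ji) scale0r.
  by rewrite big1 // => j _; rewrite ffunE scale0r.
by rewrite !ffunE eqxx => /eqP; rewrite oner_eq0.
Qed.

Lemma cc_map_on (K : fieldType) (Gamma : groupType) (H : finGroupType)
    (L : lmodType K) (p : Gamma -> H -> L) (c : crossed_coprod K Gamma H)
    (S : seq (Gamma * H)) :
  uniq S -> {subset finsupp c <= S} -> cc_map p c = \sum_(x <- S) c x *: p x.1 x.2.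
Proof.
move=> uS cS; rewrite /cc_map [RHS](bigID (mem (finsupp c))) /=.
rewrite [X in _ + X]big1 ?addr0 => [|x /fsfun_dflt ->]; last by rewrite scale0r.
rewrite -[RHS]big_filter; apply: perm_big; apply: uniq_perm; rewrite ?filter_uniq ?fset_uniq //.
by move=> x; rewrite mem_filter andb_idr //; apply: cS.
Qed.

Section Contraction.
Variables (K : fieldType) (L : algType K).

Definition contract (phi : {scalar L}) (a u v : L) : L := phi (a * u) *: v.

Lemma contract_bilinear phi a : bilinear_map (contract phi a).
Proof.
rewrite /contract; split=> c x y z.
  by rewrite mulrDr -scalerAr linearD linearZ /= scalerDl scalerA.
by rewrite scalerDr !scalerA mulrC.
Qed.

Lemma bilinear_map_flip (W : lmodType K) (b : L -> L -> W) :
  bilinear_map b -> bilinear_map (fun u v => b v u).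
Proof. by case. Qed.

End Contraction.

Section Action.
Variables (Gamma : groupType) (H : finGroupType) (act : H -> Gamma -> Gamma).
Hypothesis actP : is_action_by_automorphisms act.

Lemma act_one h : act h 1%g = 1%g.
Proof.
case: actP => _ _ actM; apply: (mulgI (act h 1%g)).
by rewrite -actM !mulg1.
Qed.

Lemma act_inj h : injective (act h).
Proof.
case: actP => act1 actM _ x y e.
by rewrite -(act1 x) -(act1 y) -(mulVg h) !actM e.
Qed.

End Action.

Section CrossedCoproductHopfMap.
Variables (K : fieldType) (Gamma : groupType) (H : finGroupType).
Variables (act : H -> Gamma -> Gamma) (L : algType K) (hL : hopf_data L).
Variable p : Gamma -> H -> L.
Hypotheses (actP : is_action_by_automorphisms act) (hLP : is_hopf_algebra hL).
Hypothesis pP : is_cc_hopf_map act hL p.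
Hypothesis p1_neq0 : forall k, p 1%g k != 0.
Hypothesis p_sep : forall (r : Gamma) (f : {ffun H -> K}),
  \sum_(k : H) p r k = \sum_(k : H) f k *: p 1%g k -> r = 1%g.

Let pM := cc_map_mult pP.

Lemma p_neq0 r k : p r k != 0.
Proof.
apply: contraNneq (p1_neq0 k) => pr0.
by have := pM r r^-1 k k; rewrite eqxx mulgV pr0 mul0r => <-.
Qed.

Definition comul_apply (b : L -> L -> L) (x : L) : L :=
  \sum_(u <- comul hL x) b u.1 u.2.

Lemma comul_apply_linear b : bilinear_map b -> linear (comul_apply b).
Proof.
move=> bL a x y; rewrite /comul_apply (comul_linear hLP a x y bL) big_cat big_map.
rewrite scaler_sumr; congr (_ + _); apply: eq_bigr => u _ /=.
by rewrite (scalable_linear (fun c x y => bL.1 c x y u.2)).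
Qed.

Lemma comul_apply_p b r k : bilinear_map b ->
  comul_apply b (p r k) = \sum_(h : H) b (p r h) (p (act h^-1 r) (h^-1 * k)).
Proof. by move=> bL; rewrite /comul_apply (cc_map_comul pP r k bL) big_map big_enum. Qed.

Lemma comul_apply_contract_l phi t k :
  comul_apply (contract phi (p 1%g k)) (p t k) = phi (p t k) *: p (act k^-1 t) 1%g.
Proof.
rewrite comul_apply_p ?(big_only1 k) // => [|h hk _|]; last exact: contract_bilinear.
  by rewrite /contract pM eqxx mul1g mulVg.
by rewrite /contract pM eq_sym (negPf hk) linear0 scale0r.
Qed.

Lemma comul_apply_contract_r phi s h :
  comul_apply (fun u v => contract phi (p 1%g h^-1) v u) (p s 1%g) =
  phi (p (act h^-1 s) h^-1) *: p s h.
Proof.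
rewrite comul_apply_p ?(big_only1 h) // => [|g gh _|].
- by rewrite /contract mulg1 pM eqxx mul1g.
- by rewrite /contract pM mulg1 (inv_eq invgK) invgK eq_sym (negPf gh) linear0 scale0r.
- exact/bilinear_map_flip/contract_bilinear.
Qed.

Lemma p_trivial_at1 s : p s 1%g = p 1%g 1%g -> s = 1%g.
Proof.
move=> ps1; have /choice[f pf] h : exists c, p s h = c *: p 1%g h.
  have [phi phi1] := exists_scalar_eq1 (p_neq0 (act h^-1 s) h^-1).
  exists (phi (p 1%g h^-1)).
  have := congr1 (comul_apply (fun u v => contract phi (p 1%g h^-1) v u)) ps1.
  by rewrite !comul_apply_contract_r (act_one actP) phi1 scale1r.
by apply: (p_sep (f := [ffun h => f h])); apply: eq_bigr => h _; rewrite ffunE.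
Qed.

Lemma p_inj1 : injective (p^~ 1%g).
Proof.
move=> x y /= pxy; have xy1 : (x^-1 * y = 1)%g.
  apply: p_trivial_at1; have := pM x^-1 y 1 1.
  by rewrite eqxx -pxy pM eqxx mulVg => <-.
by rewrite -(mulKVg x y) xy1 mulg1.
Qed.

Lemma p_lin_indep k s : uniq s -> lin_indep s (p^~ k).
Proof.
elim: s => [_ c _ //|r0 s IHs /= /andP[r0s us]].
apply: lin_indep_cons (IHs us) _ => a; apply/eqP => r0_comb.
have /hasP[r1 r1s ar1] : has (fun r => a r != 0) s.
  apply: contraNT (p_neq0 r0 k) => /hasPn a0; rewrite r0_comb big1_seq //.
  by move=> r /a0/negPn/eqP ->; rewrite scale0r.
have [phi [phi1 phi0]] := exists_dual_scalar us (IHs us) r1s.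
have phi_r0 : phi (p r0 k) = a r1.
  rewrite r0_comb linear_sum (bigD1_seq r1) //= linearZ phi1 /= mulr1.
  by rewrite big1_seq ?addr0 // => r /andP[rr1 rs]; rewrite linearZ phi0 //= mulr0.
have := congr1 (comul_apply (contract phi (p 1%g k))) r0_comb.
rewrite (linear_lin_comb _ _ _ (comul_apply_linear (contract_bilinear _ _))).
rewrite (bigD1_seq r1) //= !comul_apply_contract_l phi_r0 phi1 scale1r.
rewrite big1_seq ?addr0 => [/(scalerI ar1)/p_inj1/(act_inj actP) r01|r /andP[rr1 rs]].
  by move: r0s; rewrite r01 r1s.
by rewrite comul_apply_contract_l phi0 // scale0r scaler0.
Qed.

Lemma p_lin_indep_pairs S : uniq S -> lin_indep S (fun x => p x.1 x.2).
Proof.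
move=> uS c cS [r k] rkS; pose s := [seq x.1 | x <- S & x.2 == k].
have us : uniq s.
  rewrite map_inj_in_uniq ?filter_uniq // => -[t1 l1] [t2 l2].
  by rewrite !mem_filter /= => /andP[/eqP -> _] /andP[/eqP -> _] /= ->.
have slice_k : \sum_(t <- s) c (t, k) *: p t k = 0.
  apply: etrans (_ : _ = p 1%g k * \sum_(x <- S) c x *: p x.1 x.2) _; last first.
    by rewrite cS mulr0.
  rewrite mulr_sumr (bigID (fun x => x.2 == k)) /= [X in _ = _ + X]big1.
    rewrite addr0 big_map big_filter; apply: eq_bigr => -[t l] /= /eqP ->.
    by rewrite -scalerAr pM eqxx mul1g.
  by move=> [t l] /= lk; rewrite -scalerAr pM eq_sym (negPf lk) scaler0.
apply: (p_lin_indep (k := k) us slice_k).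
by apply/mapP; exists (r, k); rewrite // mem_filter /= eqxx.
Qed.

Lemma cc_map_inj : injective (cc_map p).
Proof.
move=> c1 c2 e; pose S := undup (finsupp c1 ++ finsupp c2).
have sub1 : {subset finsupp c1 <= S} by move=> x xc; rewrite mem_undup mem_cat xc.
have sub2 : {subset finsupp c2 <= S} by move=> x xc; rewrite mem_undup mem_cat xc orbT.
have uS : uniq S := undup_uniq _.
have c12 : {in S, c1 =1 c2}.
  apply: lin_indep_coef (p_lin_indep_pairs uS) _.
  by rewrite -(cc_map_on p uS sub1) -(cc_map_on p uS sub2).
apply/fsfunP => x; have [/c12 //|xS] := boolP (x \in S).
by rewrite !fsfun_dflt //; apply: contra xS; [apply: sub2|apply: sub1].
Qed.

End CrossedCoproductHopfMap.

Theorem lemma4p5 (R : realType) (Gamma : groupType) (H : finGroupType)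
    (act : H -> Gamma -> Gamma)
    (Hact : is_action_by_automorphisms act)
    (L : algType R[i]) (hL : hopf_data L) (HL : is_hopf_algebra hL)
    (p : Gamma -> H -> L) (Hp : is_cc_hopf_map act hL p)
    (Hsurj : forall y : L, exists c : crossed_coprod R[i] Gamma H,
               cc_map p c = y)
    (HinjCH : injective (fun f : {ffun H -> R[i]} =>
                           \sum_(k : H) f k *: p 1%g k))
    (Hsep : forall (r : Gamma) (f : {ffun H -> R[i]}),
              \sum_(k : H) p r k = \sum_(k : H) f k *: p 1%g k -> r = 1%g) :
  bijective (cc_map p).
Proof.
have p1_neq0 := lin_comb_inj_neq0 HinjCH.
have inj := cc_map_inj Hact HL Hp p1_neq0 Hsep.
have /choice[g gK] := Hsurj.
by exists g => [c|y]; [apply: inj; rewrite gK|apply: gK].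
Qed.
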